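(* Let $\mathcal A$ be a Banach algebra and $\mathcal A^\sharp=\mathcal A\oplus\mathbb C$ its unitization. If $\mathcal A^\sharp$ is semiweakly amenable, then $\mathcal A$ is semiweakly amenable.
   Context: The unitization $\mathcal A^\sharp$ is $\mathcal A\oplus\mathbb C$ with product $(a,c)(b,c')=(ab+cb+c'a,cc')$. For a Banach algebra $\mathcal A$, $\mathcal A^*$ is the dual $\mathcal A$-bimodule ($\langle x,a\cdot f\rangle=\langle xa,f\rangle$, $\langle x,f\cdot a\rangle=\langle ax,f\rangle$). A derivation $D:\mathcal A\to X$ is a bounded linear map with $D(ab)=D(a)\cdot b+a\cdot D(b)$; it is inner if $D(a)=a\cdot x-x\cdot a$ for some $x\in X$. $\mathcal A$ is semiweakly amenable if every derivation $D:\mathcal A\to\mathcal A^*$ with $\langle D(a),b\rangle+\langle D(b),a\rangle=0$ for all $a,b\in\mathcal A$ is inner. *)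

From HB Require Import structures.
From mathcomp Require Import all_boot all_order all_algebra.
From mathcomp Require Import all_classical all_reals all_analysis.
From mathcomp Require Export complex.
Export numFieldNormedType.Exports.
Import Order.TTheory GRing.Theory Num.Theory.

Set Implicit Arguments.
Unset Strict Implicit.
Unset Printing Implicit Defensive.

Local Open Scope ring_scope.

Section Defs.
Variables (K : numFieldType) (T : lmodType K).
Variables (mul : T -> T -> T) (nrm : T -> K).

Definition dual_elem (f : T -> K) : Prop :=
  (forall (c : K) (x y : T), f (c *: x + y) = c * f x + f y) /\
  (exists M : K, forall x, `|f x| <= M * nrm x).

(* D : T -> T^*, encoded as D a x = <x, D(a)>.  D is a (bounded) derivation
   into the dual bimodule, where <x, a.f> = <x a, f> and <x, f.a> = <a x, f>. *)
Definition dual_derivation (D : T -> T -> K) : Prop :=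
  (forall (c : K) (a b x : T), D (c *: a + b) x = c * D a x + D b x) /\
  (forall a, dual_elem (D a)) /\
  (exists M : K, forall a x, `|D a x| <= M * nrm a * nrm x) /\
  (forall a b x, D (mul a b) x = D a (mul b x) + D b (mul x a)).

Definition inner_dual_derivation (D : T -> T -> K) : Prop :=
  exists f : T -> K, dual_elem f /\
    forall a x, D a x = f (mul x a) - f (mul a x).

Definition semiweakly_amenable : Prop :=
  forall D : T -> T -> K, dual_derivation D ->
    (forall a b, D a b + D b a = 0) -> inner_dual_derivation D.
End Defs.

Definition banach_algebra (K : numFieldType) (V : completeNormedModType K)
  (mul : V -> V -> V) : Prop :=
  (forall (c : K) (a b x : V), mul (c *: a + b) x = c *: mul a x + mul b x) /\
  (forall (c : K) (a b x : V), mul x (c *: a + b) = c *: mul x a + mul x b) /\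
  (forall a b x : V, mul (mul a b) x = mul a (mul b x)) /\
  (forall a b : V, `|mul a b| <= `|a| * `|b|).

Definition unit_mul (K : numFieldType) (V : normedModType K)
  (mul : V -> V -> V) (p q : (V * K)%type) : (V * K)%type :=
  (mul p.1 q.1 + p.2 *: q.1 + q.2 *: p.1, p.2 * q.2).

Definition unit_norm (K : numFieldType) (V : normedModType K)
  (p : (V * K)%type) : K := `|p.1| + `|p.2|.

From mathcomp Require Import all_boot all_order all_algebra.
From mathcomp Require Import all_classical all_reals all_analysis.
From mathcomp Require Import complex.
From mathcomp Require Import ring.
Import Order.TTheory GRing.Theory Num.Theory.
Local Open Scope ring_scope.
Local Open Scope complex_scope.

(* A skew derivation D : A -> A^* extends to A# by ignoring the scalar parts,
   D#(a,c)(x,d) := D(a)(x).  The Leibniz rule for D# at (a,c), (b,c'), (x,d)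
   holds because D is skew: the only unmatched terms are d D(a)(b) + d D(b)(a).
   If D# is inner, implemented by f#, then D is implemented by the restriction
   of f# to A = A (+) 0. *)

Section LinearFunctional.
Variables (K : numFieldType) (T : lmodType K) (f : T -> K).
Hypothesis f_lin : forall c x y, f (c *: x + y) = c * f x + f y.

Lemma lin_additive x y : f (x + y) = f x + f y.
Proof. by have := f_lin 1 x y; rewrite scale1r mul1r. Qed.

Lemma lin_zero : f 0 = 0.
Proof.
have /eqP := f_lin 1 0 0; rewrite scale1r addr0 mul1r -subr_eq subrr eq_sym.
by move/eqP.
Qed.

Lemma lin_scalable c x : f (c *: x) = c * f x.
Proof. by have := f_lin c x 0; rewrite addr0 lin_zero addr0. Qed.
End LinearFunctional.

Section NormBounds.
Variable K : numFieldType.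

Lemma ler_normM_addr (u M n m : K) :
  `|u| <= M * n -> 0 <= n -> 0 <= m -> `|u| <= `|M| * (n + m).
Proof.
move=> le_u n_ge0 m_ge0.
have Mn_ge0 : 0 <= M * n := le_trans (normr_ge0 u) le_u.
rewrite -(ger0_norm Mn_ge0) normrM (ger0_norm n_ge0) in le_u.
by apply: (le_trans le_u); apply: ler_wpM2l; rewrite ?normr_ge0 ?lerDl.
Qed.

Lemma ler_normMM_addr (u M n m n' m' : K) :
  `|u| <= M * n * m -> 0 <= n -> 0 <= m -> 0 <= n' -> 0 <= m' ->
  `|u| <= `|M| * (n + n') * (m + m').
Proof.
move=> le_u n_ge0 m_ge0 n'_ge0 m'_ge0.
have Mnm_ge0 : 0 <= M * n * m := le_trans (normr_ge0 u) le_u.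
rewrite -(ger0_norm Mnm_ge0) !normrM (ger0_norm n_ge0) (ger0_norm m_ge0) in le_u.
apply: (le_trans le_u); rewrite -!mulrA; apply: ler_wpM2l; first exact: normr_ge0.
by apply: ler_pM; rewrite ?lerDl.
Qed.
End NormBounds.

Section Unitization.
Variables (K : numFieldType) (V : normedModType K) (mul : V -> V -> V).

Definition unit_ext (D : V -> V -> K) (p q : V * K) : K := D p.1 q.1.

Lemma dual_derivation_unit_ext D :
  dual_derivation mul (fun a => `|a|) D -> (forall a b, D a b + D b a = 0) ->
  dual_derivation (unit_mul mul) (@unit_norm _ V) (unit_ext D).
Proof.
move=> [D_lin [D_dual [[M D_bound] D_leibniz]]] D_skew.
have DD a b x : D (a + b) x = D a x + D b x.
  exact: (@lin_additive _ _ (fun a => D a x) (fun c a b => D_lin c a b x)).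
have DZ c a x : D (c *: a) x = c * D a x.
  exact: (@lin_scalable _ _ (fun a => D a x) (fun c a b => D_lin c a b x)).
have DxD a x y : D a (x + y) = D a x + D a y.
  by case: (D_dual a) => Da_lin _; exact: lin_additive.
have DxZ a c x : D a (c *: x) = c * D a x.
  by case: (D_dual a) => Da_lin _; exact: lin_scalable.
split; last split; last split.
- by move=> c p q r; rewrite /unit_ext /= D_lin.
- move=> p; case: (D_dual p.1) => [Dp_lin [Mp Dp_bound]]; split.
    by move=> c x y; exact: Dp_lin.
  exists `|Mp| => x; apply: ler_normM_addr; rewrite ?normr_ge0 //.
  exact: Dp_bound.
- exists `|M| => p q; apply: ler_normMM_addr; rewrite ?normr_ge0 //.
  exact: D_bound.
- move=> [a c] [b c'] [x d]; rewrite /unit_ext /unit_mul /=.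
  rewrite !DD !DZ !DxD !DxZ D_leibniz.
  have -> : D b a = - D a b by apply/eqP; rewrite -addr_eq0 addrC D_skew.
  by rewrite mulrN; ring.
Qed.

Lemma inner_of_unit_ext D :
  inner_dual_derivation (unit_mul mul) (@unit_norm _ V) (unit_ext D) ->
  inner_dual_derivation mul (fun a => `|a|) D.
Proof.
move=> [f [[f_lin [M f_bound]] f_inner]].
exists (fun x => f (x, 0)); split; first split.
- move=> c x y; rewrite -f_lin; congr f.
  by apply: injective_projections; rewrite /= ?scaler0 ?addr0.
- by exists M => x; have := f_bound (x, 0); rewrite /unit_norm /= normr0 addr0.
- move=> a x; have := f_inner (a, 0) (x, 0).
  by rewrite /unit_ext /unit_mul /= !scale0r !addr0 mulr0.
Qed.

Lemma semiweakly_amenable_of_unitization :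
  semiweakly_amenable (T := (V * K)%type) (unit_mul mul) (@unit_norm _ V) ->
  semiweakly_amenable mul (fun a => `|a|).
Proof.
move=> amenable_unit D D_der D_skew; apply: inner_of_unit_ext.
apply: amenable_unit; first exact: dual_derivation_unit_ext.
by move=> p q; exact: D_skew.
Qed.
End Unitization.

Theorem theorem3p8 (R : realType) (A : completeNormedModType R[i])
  (mul : A -> A -> A) :
  banach_algebra mul ->
  semiweakly_amenable (T := (A * R[i])%type) (unit_mul mul) (@unit_norm _ A) ->
  semiweakly_amenable mul (fun a : A => `|a|).
Proof. by move=> _; exact: semiweakly_amenable_of_unitization. Qed.
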